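(* Let $k\ge3$ and let $\mathcal X\subset\mathbb R$ be a finite set (with distance $d(x,y)=|x-y|$) having a convex-nice $k$-clustering $\mathcal C=\{C_1,\ldots,C_k\}$. Then for every integer $\ell$ with $1\le\ell\le\min_i|C_i|$ there exists an ordering of $\mathcal X$ such that the final centers of sequential $\ell$-means run on this ordering do not induce a refinement of $\mathcal C$.
   Context: A clustering of $\mathcal X$ is a set of nonempty, pairwise disjoint subsets whose union is $\mathcal X$; a $k$-clustering has exactly $k$ clusters. A clustering $\mathcal C=\{C_1,\ldots,C_k\}$ is convex-nice if for any $i\ne j$, any $x,y$ in the convex hull of $C_i$ and any $z$ in the convex hull of $C_j$, $d(y,x)<d(z,x)$. A list $T=(t_1,\ldots,t_m)$ induces the clustering of $\mathcal X$ assigning each $x$ to the index $i$ minimizing $|x-t_i|$ (ties by smallest $i$), empty clusters discarded. $\mathcal C$ is a refinement of $\mathcal C'$ if $x\sim_{\mathcal C}y$ implies $x\sim_{\mathcal C'}y$, where $x\sim_{\mathcal C}y$ means $x,y$ lie in the same cluster of $\mathcal C$. Sequential $\ell$-means on input sequence $x_1,\ldots,x_N$: set $t_i=x_i$, $n_i=1$ for $i=1,\ldots,\ell$; for each subsequent point $x$: let $i$ be the index of the closest center (ties by smallest index), increment $n_i$, and replace $t_i$ by $t_i+(1/n_i)(x-t_i)$. Output the final $(t_1,\ldots,t_\ell)$. *)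

(* real numbers R, finite sets represented as duplicate-free lists. *)
From Stdlib Require Import Reals List Permutation.
Import ListNotations.
Open Scope R_scope.

Definition sumR (l : list R) : R := fold_right Rplus 0 l.

Definition in_hull (C : list R) (y : R) : Prop :=
  exists ws : list R,
    length ws = length C /\ Forall (fun w => 0 <= w) ws /\ sumR ws = 1 /\
    y = sumR (map (fun p => fst p * snd p) (combine ws C)).

Definition is_clustering (X : list R) (Cs : list (list R)) : Prop :=
  Forall (fun C => C <> [] /\ NoDup C) Cs /\
  (forall i j x, (i < length Cs)%nat -> (j < length Cs)%nat -> i <> j ->
     In x (nth i Cs []) -> ~ In x (nth j Cs [])) /\
  (forall x, In x X <-> exists C, In C Cs /\ In x C).

Definition is_k_clustering (k : nat) (X : list R) (Cs : list (list R)) : Prop :=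
  is_clustering X Cs /\ length Cs = k.

Definition convex_nice (Cs : list (list R)) : Prop :=
  forall i j, (i < length Cs)%nat -> (j < length Cs)%nat -> i <> j ->
    forall x y z, in_hull (nth i Cs []) x -> in_hull (nth i Cs []) y ->
      in_hull (nth j Cs []) z -> Rabs (y - x) < Rabs (z - x).

Definition same_cluster (Cs : list (list R)) (x y : R) : Prop :=
  exists C, In C Cs /\ In x C /\ In y C.

(* ---------- nearest center (ties broken by smallest index) ---------- *)
Fixpoint argmin_aux (T : list R) (x : R) (i bi : nat) (bd : R) : nat :=
  match T with
  | [] => bi
  | t :: T' =>
      if Rlt_dec (Rabs (x - t)) bd then argmin_aux T' x (S i) i (Rabs (x - t))
      else argmin_aux T' x (S i) bi bd
  end.

Definition nearest (T : list R) (x : R) : nat :=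
  match T with
  | [] => O
  | t :: T' => argmin_aux T' x 1 0 (Rabs (x - t))
  end.

(* x ~ y in the clustering induced by T (empty clusters are irrelevant) *)
Definition same_induced (T : list R) (x y : R) : Prop := nearest T x = nearest T y.

Definition refines (X : list R) (rel rel' : R -> R -> Prop) : Prop :=
  forall x y, In x X -> In y X -> rel x y -> rel' x y.

Fixpoint replace_nth {A} (l : list A) (i : nat) (a : A) : list A :=
  match l, i with
  | [], _ => []
  | _ :: l', O => a :: l'
  | b :: l', S i' => b :: replace_nth l' i' a
  end.

(* state: list of (center t_i, count n_i) *)
Definition seq_step (st : list (R * nat)) (x : R) : list (R * nat) :=
  let i := nearest (map fst st) x in
  let '(t, n) := nth i st (0, O) in
  let n' := S n in
  replace_nth st i (t + / INR n' * (x - t), n').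

Definition seq_means (l : nat) (xs : list R) : list R :=
  map fst (fold_left seq_step (skipn l xs) (map (fun x => (x, 1%nat)) (firstn l xs))).

From Stdlib Require Import Reals RList List Permutation Sorted Mergesort Lra Lia.
Import ListNotations.
Open Scope R_scope.

(* Let [a0] be the least point of [X], [A] its cluster and [a1 = max A].  Convex
   niceness puts every other point strictly to the right of [a1].  Feed [A]
   first and then the remaining points in increasing order.  While [A] is being
   read every center stays a convex combination of points of [A], hence [<= a1];
   afterwards each incoming point lies to the right of all centers, so it is
   captured by a rightmost center, and at every time at most one center has
   left [(-oo, a1]].  Finally [a1] and one point from each of two further
   clusters all lie right of [a1]; any of them not captured by the exceptional
   center is captured by the same (rightmost, smallest-index) center among the
   others, so two of the three points from distinct clusters share a center. *)

Lemma Rabs_closer_le a b x :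
  a <= x -> b <= x -> Rabs (x - a) <= Rabs (x - b) -> b <= a.
Proof. intros Ha Hb; rewrite !Rabs_right by lra; lra. Qed.

Definition nearest_upto (T : list R) (x : R) (i n : nat) : Prop :=
  (n < i)%nat /\
  (forall m, (m < i)%nat -> Rabs (x - nth n T 0) <= Rabs (x - nth m T 0)) /\
  (forall m, (m < n)%nat -> Rabs (x - nth n T 0) < Rabs (x - nth m T 0)).

Lemma argmin_aux_spec x T : forall P n,
  nearest_upto (P ++ T) x (length P) n ->
  nearest_upto (P ++ T) x (length (P ++ T))
    (argmin_aux T x (length P) n (Rabs (x - nth n (P ++ T) 0))).
Proof.
  induction T as [|t T IH]; intros P n Hn; simpl.
  { rewrite app_nil_r in *; exact Hn. }
  assert (Ht : nth (length P) (P ++ t :: T) 0 = t) by apply nth_middle.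
  replace (S (length P)) with (length (P ++ [t]))
    by (rewrite length_app; simpl; lia).
  replace (P ++ t :: T) with ((P ++ [t]) ++ T) in *
    by (rewrite <- app_assoc; reflexivity).
  destruct Hn as (Hni & Hle & Hlt).
  destruct (Rlt_dec (Rabs (x - t)) (Rabs (x - nth n ((P ++ [t]) ++ T) 0))) as [Hc|Hc].
  - replace (Rabs (x - t)) with (Rabs (x - nth (length P) ((P ++ [t]) ++ T) 0))
      by now rewrite Ht.
    apply IH; split; [rewrite length_app; simpl; lia|split]; rewrite Ht.
    + rewrite length_app; simpl; intros m Hm.
      destruct (Nat.eq_dec m (length P)) as [->|]; [rewrite Ht; lra|].
      specialize (Hle m ltac:(lia)); lra.
    + intros m Hm. specialize (Hle m Hm); lra.
  - apply IH; split; [rewrite length_app; simpl; lia|split; [|exact Hlt]].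
    rewrite length_app; simpl; intros m Hm.
    destruct (Nat.eq_dec m (length P)) as [->|]; [rewrite Ht; lra|].
    apply Hle; lia.
Qed.

Lemma nearest_spec T x : T <> [] -> nearest_upto T x (length T) (nearest T x).
Proof.
  destruct T as [|t T]; [congruence|intros _].
  apply (argmin_aux_spec x T [t] 0).
  split; [simpl; lia|split]; intros m Hm; simpl in Hm;
    [replace m with 0%nat by lia; lra|lia].
Qed.

Definition all_le (T : list R) (b : R) : Prop :=
  forall i, (i < length T)%nat -> nth i T 0 <= b.

Definition all_but_one_le (T : list R) (a : R) : Prop :=
  exists j, forall i, (i < length T)%nat -> i <> j -> nth i T 0 <= a.

Lemma nearest_eq_above T a j u w :
  (forall i, (i < length T)%nat -> i <> j -> nth i T 0 <= a) -> a <= u -> a <= w ->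
  nearest T u <> j -> nearest T w <> j -> nearest T u = nearest T w.
Proof.
  intros HT Hu Hw Huj Hwj.
  destruct T as [|t T']; [reflexivity|].
  destruct (nearest_spec (t :: T') u ltac:(discriminate)) as (Hu1 & Hu2 & Hu3).
  destruct (nearest_spec (t :: T') w ltac:(discriminate)) as (Hw1 & Hw2 & Hw3).
  set (T := t :: T') in *.
  set (nu := nearest T u) in *; set (nw := nearest T w) in *.
  pose proof (HT nu Hu1 Huj); pose proof (HT nw Hw1 Hwj).
  assert (nth nw T 0 <= nth nu T 0) by (apply (Rabs_closer_le _ _ u); auto; lra).
  assert (nth nu T 0 <= nth nw T 0) by (apply (Rabs_closer_le _ _ w); auto; lra).
  assert (Heq : nth nu T 0 = nth nw T 0) by lra.
  destruct (Nat.lt_total nu nw) as [Hlt|[->|Hgt]]; [|reflexivity|].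
  - specialize (Hw3 nu Hlt); rewrite Heq in Hw3; lra.
  - specialize (Hu3 nw Hgt); rewrite Heq in Hu3; lra.
Qed.

Lemma nearest_collision T a u v w :
  all_but_one_le T a -> a <= u -> a <= v -> a <= w ->
  nearest T u = nearest T v \/ nearest T u = nearest T w \/ nearest T v = nearest T w.
Proof.
  intros [j Hj] Hu Hv Hw.
  destruct (Nat.eq_dec (nearest T u) j), (Nat.eq_dec (nearest T v) j),
    (Nat.eq_dec (nearest T w) j).
  all: try (left; congruence); try (right; left; congruence);
    try (right; right; congruence).
  all: first [left; eapply nearest_eq_above; eauto; fail
             | right; left; eapply nearest_eq_above; eauto; fail
             | right; right; eapply nearest_eq_above; eauto].
Qed.

Lemma replace_nth_length {A} (l : list A) i a : length (replace_nth l i a) = length l.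
Proof. revert i; induction l; intros [|i]; simpl; auto. Qed.

Lemma replace_nth_nth {A} (l : list A) i a d m : (i < length l)%nat ->
  nth m (replace_nth l i a) d = if Nat.eq_dec m i then a else nth m l d.
Proof.
  revert i m; induction l as [|b l IH]; intros i m Hi; [simpl in Hi; lia|].
  destruct i as [|i], m as [|m]; simpl; try reflexivity.
  rewrite IH by (simpl in Hi; lia); destruct (Nat.eq_dec m i); reflexivity.
Qed.

Lemma nth_map_fst (st : list (R * nat)) i :
  nth i (map fst st) 0 = fst (nth i st (0, O)).
Proof. exact (map_nth fst st (0, O) i). Qed.

Lemma seq_step_length st x : length (seq_step st x) = length st.
Proof. unfold seq_step; destruct (nth _ st _); apply replace_nth_length. Qed.

Lemma seq_step_centers st x :
  exists c, 0 <= c <= 1 /\ forall i, (i < length st)%nat ->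
    nth i (map fst (seq_step st x)) 0 =
    if Nat.eq_dec i (nearest (map fst st) x)
    then nth (nearest (map fst st) x) (map fst st) 0
         + c * (x - nth (nearest (map fst st) x) (map fst st) 0)
    else nth i (map fst st) 0.
Proof.
  destruct st as [|p st']; [exists 1; split; [lra|simpl; lia]|].
  set (st := p :: st').
  destruct (nearest_spec (map fst st) x ltac:(discriminate)) as (Hn & _).
  rewrite length_map in Hn.
  unfold seq_step.
  destruct (nth (nearest (map fst st) x) st (0, O)) as [t k] eqn:E.
  exists (/ INR (S k)); split.
  - split; [apply Rlt_le, Rinv_0_lt_compat, lt_0_INR; lia|].
    rewrite <- Rinv_1; apply Rinv_le_contravar; [lra|apply (le_INR 1); lia].
  - intros i Hi.
    rewrite !nth_map_fst, replace_nth_nth, E by exact Hn.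
    destruct Nat.eq_dec; reflexivity.
Qed.

Lemma seq_step_le_bound st x b :
  all_le (map fst st) b -> x <= b -> all_le (map fst (seq_step st x)) b.
Proof.
  intros Hst Hx i Hi.
  rewrite length_map, seq_step_length in Hi.
  destruct (seq_step_centers st x) as (c & Hc & ->); [|exact Hi].
  pose proof (Hst i ltac:(rewrite length_map; exact Hi)) as Hti.
  destruct Nat.eq_dec as [<-|]; [nra|exact Hti].
Qed.

Lemma fold_seq_step_le_bound P st b :
  all_le (map fst st) b -> Forall (fun x => x <= b) P ->
  all_le (map fst (fold_left seq_step P st)) b.
Proof.
  revert st; induction P as [|x P IH]; intros st Hst HP; simpl; [exact Hst|].
  inversion_clear HP; apply IH; [apply seq_step_le_bound|]; assumption.
Qed.

(* A point to the right of every center is captured by a rightmost center. *)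
Lemma seq_step_above st x a :
  all_le (map fst st) x -> all_but_one_le (map fst st) a ->
  all_le (map fst (seq_step st x)) x /\ all_but_one_le (map fst (seq_step st x)) a.
Proof.
  intros Hx [j Hj].
  split; [apply seq_step_le_bound; [exact Hx|lra]|].
  set (n := nearest (map fst st) x).
  destruct (seq_step_centers st x) as (c & Hc & Hstep).
  exists n; intros i Hi Hin.
  rewrite length_map, seq_step_length in Hi.
  rewrite Hstep by exact Hi; fold n.
  destruct (Nat.eq_dec i n) as [|_]; [contradiction|].
  assert (Hi' : (i < length (map fst st))%nat) by (rewrite length_map; exact Hi).
  destruct (Nat.eq_dec i j) as [->|]; [|apply Hj; assumption].
  destruct (nearest_spec (map fst st) x) as (Hn & Hmin & _);
    [destruct st; [simpl in Hi; lia|discriminate]|].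
  fold n in Hn, Hmin.
  pose proof (Hj n Hn (not_eq_sym Hin)).
  assert (nth j (map fst st) 0 <= nth n (map fst st) 0)
    by (apply (Rabs_closer_le _ _ x); auto).
  lra.
Qed.

Lemma fold_seq_step_sorted_above S st a b :
  Sorted Rle S -> HdRel Rle b S -> all_le (map fst st) b ->
  all_but_one_le (map fst st) a ->
  all_but_one_le (map fst (fold_left seq_step S st)) a.
Proof.
  revert st b; induction S as [|x S IH]; intros st b HS Hb Hst Ha; simpl; [exact Ha|].
  apply Sorted_inv in HS as [HS HxS]; apply HdRel_inv in Hb.
  assert (Hstx : all_le (map fst st) x) by (intros i Hi; specialize (Hst i Hi); lra).
  destruct (seq_step_above st x a Hstx Ha).
  apply (IH _ x); assumption.
Qed.

Lemma seq_means_app l A S : (l <= length A)%nat ->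
  seq_means l (A ++ S) =
  map fst (fold_left seq_step S
    (fold_left seq_step (skipn l A) (map (fun x => (x, 1%nat)) (firstn l A)))).
Proof.
  intros HlA; unfold seq_means.
  rewrite firstn_app, skipn_app, fold_left_app.
  replace (l - length A)%nat with 0%nat by lia.
  simpl; rewrite app_nil_r; reflexivity.
Qed.

Lemma seq_means_block_then_increasing l A S a :
  (l <= length A)%nat -> (forall x, In x A -> x <= a) ->
  Sorted Rle S -> Forall (Rle a) S -> all_but_one_le (seq_means l (A ++ S)) a.
Proof.
  intros HlA HA HS HaS.
  rewrite seq_means_app by exact HlA.
  assert (HAparts : forall x, In x (firstn l A) \/ In x (skipn l A) -> x <= a).
  { intros x Hx; apply HA; rewrite <- (firstn_skipn l A); apply in_or_app, Hx. }
  assert (Hblock : all_le (map fst (fold_left seq_step (skipn l A)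
                     (map (fun x => (x, 1%nat)) (firstn l A)))) a).
  { apply fold_seq_step_le_bound.
    - intros i Hi; rewrite map_map, map_id in *.
      apply HAparts; left; apply nth_In, Hi.
    - apply Forall_forall; intros x Hx; apply HAparts; right; exact Hx. }
  apply (fold_seq_step_sorted_above _ _ _ a); [exact HS| |exact Hblock|].
  - destruct HaS; constructor; assumption.
  - exists 0%nat; intros i Hi _; apply Hblock, Hi.
Qed.

Module RLeBool <: Orders.TotalLeBool.
  Definition t := R.
  Definition leb (x y : R) : bool := if Rle_dec x y then true else false.
  Lemma leb_total x y : leb x y = true \/ leb y x = true.
  Proof. unfold leb; destruct (Rle_dec x y), (Rle_dec y x); auto; lra. Qed.
End RLeBool.

Module RSort := Sort RLeBool.

Lemma exists_sorted_permutation (l : list R) :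
  exists s, Permutation l s /\ Sorted Rle s.
Proof.
  exists (RSort.sort l); split; [apply RSort.Permuted_sort|].
  generalize (RSort.Sorted_sort l); generalize (RSort.sort l).
  induction 1 as [|x s _ IH Hd]; constructor; [exact IH|].
  destruct Hd as [|y s' Hxy]; constructor.
  unfold is_true, RLeBool.leb in Hxy; destruct (Rle_dec x y); [assumption|discriminate].
Qed.

Lemma exists_min (l : list R) y :
  In y l -> exists m, In m l /\ forall x, In x l -> m <= x.
Proof.
  intros Hy; destruct (exists_sorted_permutation l) as ([|m s] & Hperm & Hsorted).
  { apply Permutation_sym, Permutation_nil in Hperm; subst l; destruct Hy. }
  apply (Sorted_StronglySorted Rle_trans), StronglySorted_inv in Hsorted as [_ Hm].
  exists m; split; [apply (Permutation_in _ (Permutation_sym Hperm)); left; reflexivity|].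
  intros x Hx; apply (Permutation_in _ Hperm) in Hx as [->|Hx]; [lra|].
  rewrite Forall_forall in Hm; apply Hm, Hx.
Qed.

Lemma exists_block_then_sorted (X A : list R) :
  NoDup X -> NoDup A -> incl A X ->
  exists S, Permutation (A ++ S) X /\ Sorted Rle S /\
    forall x, In x S -> In x X /\ ~ In x A.
Proof.
  intros HX HA HAX.
  set (rest := filter (fun x => if in_dec Req_dec_T x A then false else true) X).
  assert (Hrest : forall x, In x rest <-> In x X /\ ~ In x A).
  { intros x; unfold rest; rewrite filter_In.
    destruct (in_dec Req_dec_T x A); intuition discriminate. }
  destruct (exists_sorted_permutation rest) as (S & Hperm & Hsorted).
  exists S; split; [|split; [exact Hsorted|]].
  - transitivity (A ++ rest); [apply Permutation_app_head, Permutation_sym, Hperm|].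
    apply NoDup_Permutation; [|exact HX|].
    + apply NoDup_app; [exact HA|apply NoDup_filter, HX|].
      intros x HxA Hx; apply Hrest in Hx; tauto.
    + intros x; rewrite in_app_iff, Hrest; split; [intros [Hx|[Hx _]]; auto|].
      intros Hx; destruct (in_dec Req_dec_T x A); tauto.
  - intros x Hx; apply Hrest, (Permutation_in _ (Permutation_sym Hperm)), Hx.
Qed.

Lemma two_other_indices n i : (3 <= n)%nat -> (i < n)%nat ->
  exists j k, (j < n)%nat /\ (k < n)%nat /\ j <> i /\ k <> i /\ j <> k.
Proof.
  intros Hn Hi.
  destruct i as [|[|i]]; [exists 1%nat, 2%nat|exists 0%nat, 2%nat|exists 0%nat, 1%nat];
    lia.
Qed.

Lemma in_hull_In C x : In x C -> in_hull C x.
Proof.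
  induction C as [|c C IH]; intros Hx; [destruct Hx|].
  destruct Hx as [<-|Hx].
  - exists (1 :: repeat 0 (length C)); simpl; rewrite repeat_length.
    assert (Hsum0 : forall n, sumR (repeat 0 n) = 0)
      by (induction n; simpl; [reflexivity|rewrite IHn; lra]).
    assert (Hcomb0 : forall n,
      sumR (map (fun p => fst p * snd p) (combine (repeat 0 n) C)) = 0).
    { clear IH; induction C as [|c' C IHC]; intros [|n]; simpl; try reflexivity.
      rewrite IHC; lra. }
    repeat split; [|rewrite Hsum0; lra|rewrite Hcomb0; lra].
    constructor; [lra|apply Forall_forall; intros w Hw; apply repeat_spec in Hw; lra].
  - destruct (IH Hx) as (ws & Hlen & Hpos & Hsum & Hcomb).
    exists (0 :: ws); simpl; repeat split; auto; [constructor; auto; lra|lra|lra].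
Qed.

Section Clustering.

Variables (X : list R) (Cs : list (list R)).
Hypothesis Hcl : is_clustering X Cs.

Lemma cluster_NoDup i : (i < length Cs)%nat -> NoDup (nth i Cs []).
Proof.
  intros Hi; destruct Hcl as (Hne & _ & _).
  rewrite Forall_forall in Hne; apply Hne, nth_In, Hi.
Qed.

Lemma cluster_inhabited i : (i < length Cs)%nat -> exists y, In y (nth i Cs []).
Proof.
  intros Hi; destruct Hcl as (Hne & _ & _); rewrite Forall_forall in Hne.
  destruct (Hne _ (nth_In Cs [] Hi)) as [HC _].
  destruct (nth i Cs []) as [|y C]; [congruence|exists y; left; reflexivity].
Qed.

Lemma cluster_incl i : (i < length Cs)%nat -> incl (nth i Cs []) X.
Proof.
  intros Hi x Hx; destruct Hcl as (_ & _ & Hcover).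
  apply Hcover; exists (nth i Cs []); split; [apply nth_In, Hi|exact Hx].
Qed.

Lemma cluster_index x : In x X -> exists i, (i < length Cs)%nat /\ In x (nth i Cs []).
Proof.
  intros Hx; destruct Hcl as (_ & _ & Hcover).
  destruct (proj1 (Hcover x) Hx) as (C & HC & HxC).
  destruct (In_nth Cs C [] HC) as (i & Hi & <-); exists i; auto.
Qed.

Lemma not_same_cluster i j u w :
  (i < length Cs)%nat -> (j < length Cs)%nat -> i <> j ->
  In u (nth i Cs []) -> In w (nth j Cs []) -> ~ same_cluster Cs u w.
Proof.
  intros Hi Hj Hij Hu Hw (C & HC & HuC & HwC).
  destruct Hcl as (_ & Hdisj & _).
  destruct (In_nth Cs C [] HC) as (m & Hm & <-).
  destruct (Nat.eq_dec m i) as [->|Hmi].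
  - exact (Hdisj j i w Hj Hi (not_eq_sym Hij) Hw HwC).
  - exact (Hdisj i m u Hi Hm (not_eq_sym Hmi) Hu HuC).
Qed.

Hypothesis Hnice : convex_nice Cs.

Lemma min_cluster_lt i a0 a :
  (i < length Cs)%nat -> In a0 (nth i Cs []) -> (forall x, In x X -> a0 <= x) ->
  In a (nth i Cs []) -> forall p, In p X -> ~ In p (nth i Cs []) -> a < p.
Proof.
  intros Hi Ha0 Hmin Ha p Hp HpA.
  destruct (cluster_index p Hp) as (j & Hj & Hpj).
  assert (Hij : i <> j) by (intros <-; contradiction).
  pose proof (Hnice i j Hi Hj Hij a0 a p (in_hull_In _ _ Ha0) (in_hull_In _ _ Ha)
                (in_hull_In _ _ Hpj)) as Hd.
  pose proof (Hmin a (cluster_incl i Hi a Ha)); pose proof (Hmin p Hp).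
  rewrite !Rabs_right in Hd by lra; lra.
Qed.

Hypothesis HX : NoDup X.

Lemma exists_ordering_min_cluster_first l :
  (0 < length Cs)%nat -> (forall C, In C Cs -> (l <= length C)%nat) ->
  exists i a ord, (i < length Cs)%nat /\ In a (nth i Cs []) /\
    (forall p, In p X -> ~ In p (nth i Cs []) -> a < p) /\
    Permutation ord X /\ all_but_one_le (seq_means l ord) a.
Proof.
  intros HCs Hsize.
  destruct (cluster_inhabited 0 HCs) as [y0 Hy0].
  destruct (exists_min X y0 (cluster_incl 0 HCs y0 Hy0)) as (a0 & Ha0X & Hmin).
  destruct (cluster_index a0 Ha0X) as (i & Hi & Ha0A).
  set (A := nth i Cs []) in *.
  pose proof (MaxRlist_P2 A (ex_intro _ a0 Ha0A)) as Ha1A.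
  pose proof (min_cluster_lt i a0 (MaxRlist A) Hi Ha0A Hmin Ha1A) as Hright.
  destruct (exists_block_then_sorted X A HX (cluster_NoDup i Hi) (cluster_incl i Hi))
    as (S & Hperm & HS & HSright).
  exists i, (MaxRlist A), (A ++ S); repeat split; auto.
  apply seq_means_block_then_increasing;
    [apply Hsize, nth_In, Hi|apply MaxRlist_P1|exact HS|].
  apply Forall_forall; intros x Hx; apply Rlt_le, Hright; apply HSright, Hx.
Qed.

End Clustering.

Theorem mainTheorem11 (k : nat) (X : list R) (Cs : list (list R)) (l : nat) :
  (3 <= k)%nat ->
  NoDup X ->
  is_k_clustering k X Cs ->
  convex_nice Cs ->
  (1 <= l)%nat ->
  (forall C, In C Cs -> (l <= length C)%nat) ->
  exists ord : list R, Permutation ord X /\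
    ~ refines X (same_induced (seq_means l ord)) (same_cluster Cs).
Proof.
  intros Hk HX [Hcl <-] Hnice _ Hsize.
  destruct (exists_ordering_min_cluster_first X Cs Hcl Hnice HX l ltac:(lia) Hsize)
    as (iA & a1 & ord & HiA & Ha1 & Hright & Hperm & Hcenters).
  exists ord; split; [exact Hperm|intros Hrefines].
  destruct (two_other_indices _ _ Hk HiA) as (iB & iC & HiB & HiC & HBA & HCA & HBC).
  destruct (cluster_inhabited X Cs Hcl iB HiB) as [y Hy].
  destruct (cluster_inhabited X Cs Hcl iC HiC) as [z Hz].
  pose proof (cluster_incl X Cs Hcl iA HiA a1 Ha1).
  pose proof (cluster_incl X Cs Hcl iB HiB y Hy).
  pose proof (cluster_incl X Cs Hcl iC HiC z Hz).
  pose proof Hcl as (_ & Hdisj & _).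
  assert (a1 < y) by (apply Hright, (Hdisj iB iA); auto).
  assert (a1 < z) by (apply Hright, (Hdisj iC iA); auto).
  destruct (nearest_collision _ a1 a1 y z Hcenters) as [E|[E|E]]; try lra.
  - apply (not_same_cluster X Cs Hcl iA iB a1 y), Hrefines; auto.
  - apply (not_same_cluster X Cs Hcl iA iC a1 z), Hrefines; auto.
  - apply (not_same_cluster X Cs Hcl iB iC y z), Hrefines; auto.
Qed.
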